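(* Let $\mathcal{C}:=\operatorname{conv}(\{\Sigma_e\}_{e\in\mathcal{E}})$ and let $\mathcal{P}$ be the set of all distributions $P$ on $\mathbb{R}^{1\times p}$ with $\mathbb{E}_P[\mathbf{x}]=0$ and finite second moments such that $\mathbb{E}_P[\mathbf{x}^\top\mathbf{x}]\in\mathcal{C}$. Let $\mathcal{L}$ be one of $\mathcal{L}_{\mathrm{RCS}}$, $-\mathcal{L}_{\mathrm{var}}$, $\mathcal{L}_{\mathrm{reg}}$, and let $V_k^*\in\mathcal{O}_{p\times k}$ be a solution of the corresponding problem (maxRCS, minPCA, maxRegret respectively), i.e. $V_k^*\in\arg\min_{V\in\mathcal{O}_{p\times k}}\max_{e\in\mathcal{E}}\mathcal{L}(V;P_e)$. Then: (i) for all $V\in\mathcal{O}_{p\times k}$, $\sup_{P\in\mathcal{P}}\mathcal{L}(V;P)=\max_{e\in\mathcal{E}}\mathcal{L}(V;P_e)$; (ii) for all $V,W\in\mathcal{O}_{p\times k}$, if $\max_e\mathcal{L}(V;P_e)<\max_e\mathcal{L}(W;P_e)$ then $\sup_{P\in\mathcal{P}}\mathcal{L}(V;P)<\sup_{P\in\mathcal{P}}\mathcal{L}(W;P)$; (iii) $V_k^*\in\arg\min_{V\in\mathcal{O}_{p\times k}}\sup_{P\in\mathcal{P}}\mathcal{L}(V;P)$; (iv) the conclusion of (iii) does not hold in general for pooled PCA and separate PCA: there exist $p,k,E$, weights $(w_e)$ and source distributions such that the (unique up to sign) solution $V^{\mathrm{pool}}$ of poolPCA and the solution $V^{\mathrm{sep}}$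 of sepPCA are not in $\arg\min_{V}\sup_{P\in\mathcal{P}}\mathcal{L}(V;P)$.
   Context: Let $p\ge 1$ and $1\le k\le p$ be integers and $\mathcal{O}_{p\times k}:=\{V\in\mathbb{R}^{p\times k}: V^\top V=I_k\}$. Source domains are $\mathcal{E}=\{1,\dots,E\}$; for each $e\in\mathcal{E}$, $P_e$ is a distribution on row vectors $\mathbf{x}\in\mathbb{R}^{1\times p}$ with $\mathbb{E}[\mathbf{x}]=0$ and finite covariance $\Sigma_e:=\mathbb{E}[\mathbf{x}^\top\mathbf{x}]$ with $\operatorname{Tr}(\Sigma_e)>0$; weights $w_e>0$ with $\sum_e w_e=1$. For symmetric positive semidefinite $\Sigma$ and $V\in\mathcal{O}_{p\times k}$: $\mathcal{L}_{\mathrm{var}}(V;\Sigma)=\operatorname{Tr}(V^\top\Sigma V)$, $\mathcal{L}_{\mathrm{RCS}}(V;\Sigma)=\operatorname{Tr}(\Sigma)-\operatorname{Tr}(V^\top\Sigma V)$ ($=\mathbb{E}\|\mathbf{x}-\mathbf{x}VV^\top\|_2^2$), $\mathcal{L}_{\mathrm{reg}}(V;\Sigma)=\mathcal{L}_{\mathrm{RCS}}(V;\Sigma)-\min_{W\in\mathcal{O}_{p\times k}}\mathcal{L}_{\mathrm{RCS}}(W;\Sigma)$; for a distribution $P$ with covariance $\Sigma=\mathbb{E}_P[\mathbf{x}^\top\mathbf{x}]$, $\mathcal{L}(V;P):=\mathcal{L}(V;\Sigma)$. poolPCA: $V^{\mathrm{pool}}\in\arg\max_{V\in\mathcal{O}_{p\times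 k}}\operatorname{Tr}(V^\top\Sigma_{\mathrm{pool}}V)$ with $\Sigma_{\mathrm{pool}}=\sum_e w_e\Sigma_e$. sepPCA: for each $e$ let $V^{*,e}\in\arg\max_V\operatorname{Tr}(V^\top\Sigma_eV)$, let $e_0$ be the smallest index minimizing $\operatorname{Tr}((V^{*,e})^\top\Sigma_eV^{*,e})$, and $V^{\mathrm{sep}}:=V^{*,e_0}$. *)

From HB Require Import structures.
From mathcomp Require Import all_boot all_order all_algebra.
From mathcomp Require Import all_classical all_reals all_analysis.
Set Implicit Arguments. Unset Strict Implicit. Unset Printing Implicit Defensive.
Import Order.TTheory GRing.Theory Num.Theory.
Local Open Scope classical_set_scope.
Local Open Scope ring_scope.

Section Defs.
Variable R : realType.

Definition orthonormal_mx (p k : nat) (V : 'M[R]_(p, k)) : Prop :=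
  V^T *m V = 1%:M.

Definition Lvar (p k : nat) (V : 'M[R]_(p, k)) (S : 'M[R]_p) : R :=
  \tr (V^T *m S *m V).

Definition LRCS (p k : nat) (V : 'M[R]_(p, k)) (S : 'M[R]_p) : R :=
  \tr S - Lvar V S.

(* L_reg(V;S) = L_RCS(V;S) - min_{W in O} L_RCS(W;S)  (the min exists by
   compactness, so it equals the infimum used here) *)
Definition Lreg (p k : nat) (V : 'M[R]_(p, k)) (S : 'M[R]_p) : R :=
  LRCS V S - inf [set LRCS W S | W in [set W : 'M[R]_(p, k) | orthonormal_mx W]].

Inductive loss_kind := RCS_loss | negVar_loss | Reg_loss.

Definition Lk (kind : loss_kind) (p k : nat) (V : 'M[R]_(p, k)) (S : 'M[R]_p) : R :=
  match kind with
  | RCS_loss => LRCS V S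
  | negVar_loss => - Lvar V S
  | Reg_loss => Lreg V S
  end.

Definition maxdom (E : nat) (f : 'I_E -> R) : R := sup [set f e | e in [set: 'I_E]].

(* A distribution on R^{1 x p}, represented as the law of a random row vector
   X : T -> 'rV_p on a probability space (T, P): measurable coordinates,
   finite second moments, and mean zero. *)
Definition centered_rv (d : measure_display) (T : measurableType d)
  (P : probability T R) (p : nat) (X : T -> 'rV[R]_p) : Prop :=
  (forall i : 'I_p, measurable_fun setT (fun t => X t 0 i)) /\
  (forall i : 'I_p, P.-integrable setT (fun t => ((X t 0 i) ^+ 2)%:E)) /\
  (forall i : 'I_p, (\int[P]_t (X t 0 i)%:E = 0)%E).

Definition cov (d : measure_display) (T : measurableType d)
  (P : probability T R) (p : nat) (X : T -> 'rV[R]_p) : 'M[R]_p :=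
  \matrix_(i, j) fine (\int[P]_t (X t 0 i * X t 0 j)%:E).

Definition in_conv (E p : nat) (Sig : 'I_E -> 'M[R]_p) (S : 'M[R]_p) : Prop :=
  exists lam : 'I_E -> R, (forall e, 0 <= lam e) /\ \sum_(e < E) lam e = 1 /\
    S = \sum_(e < E) lam e *: Sig e.

Definition loss_values (kind : loss_kind) (E p k : nat) (Sig : 'I_E -> 'M[R]_p)
  (V : 'M[R]_(p, k)) : set R :=
  [set r | exists (d : measure_display) (T : measurableType d)
             (P : probability T R) (X : T -> 'rV[R]_p),
             centered_rv P X /\ in_conv Sig (cov P X) /\ r = Lk kind V (cov P X)].

Definition supP (kind : loss_kind) (E p k : nat) (Sig : 'I_E -> 'M[R]_p)
  (V : 'M[R]_(p, k)) : R := sup (loss_values kind Sig V).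

Definition is_sup (A : set R) (s : R) : Prop :=
  ubound A s /\ (forall b, ubound A b -> s <= b).

Definition argmin_orth (p k : nat) (f : 'M[R]_(p, k) -> R) (V : 'M[R]_(p, k)) : Prop :=
  orthonormal_mx V /\ (forall W, orthonormal_mx W -> f V <= f W).

Definition argmax_orth (p k : nat) (f : 'M[R]_(p, k) -> R) (V : 'M[R]_(p, k)) : Prop :=
  orthonormal_mx V /\ (forall W, orthonormal_mx W -> f W <= f V).

Definition is_poolPCA (E p k : nat) (w : 'I_E -> R) (Sig : 'I_E -> 'M[R]_p)
  (V : 'M[R]_(p, k)) : Prop :=
  argmax_orth (fun W => Lvar W (\sum_(e < E) w e *: Sig e)) V.

Definition is_sepPCA (E p k : nat) (Sig : 'I_E -> 'M[R]_p)
  (Vs : 'I_E -> 'M[R]_(p, k)) (V : 'M[R]_(p, k)) : Prop :=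
  (forall e, argmax_orth (fun W => Lvar W (Sig e)) (Vs e)) /\
  exists e0 : 'I_E,
    (forall e, Lvar (Vs e0) (Sig e0) <= Lvar (Vs e) (Sig e)) /\
    (forall e : 'I_E, (e < e0)%N -> Lvar (Vs e0) (Sig e0) < Lvar (Vs e) (Sig e)) /\
    V = Vs e0.

End Defs.

From HB Require Import structures.
From mathcomp Require Import all_boot all_order all_algebra.
From mathcomp Require Import all_classical all_reals all_analysis.
From mathcomp Require Import ring lra.
Import Order.TTheory GRing.Theory Num.Theory.
Local Open Scope classical_set_scope.
Local Open Scope ring_scope.

(* Each loss is a convex function of the covariance: L_RCS and -L_var are
   linear, and L_reg is L_RCS minus a minimum of linear functions.  Over
   conv{Sigma_e} it is therefore maximized at some Sigma_e, and Sigma_e is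
   realized by P_e itself; so the worst case over the ambiguity set equals the
   worst case over the sources, which gives (i)-(iii).  For (iv) take two
   sources in R^2 with covariances e1 e1^T and e2 e2^T: pooled and separate PCA
   both return a coordinate axis, whose worst-case loss exceeds that of the
   diagonal direction by 1/2. *)

Section RealBasics.
Context {R : realType}.
Implicit Types (A : set R) (x : R).

Lemma sup_eq_ub_mem A x : A x -> ubound A x -> sup A = x.
Proof.
move=> Ax ubx; apply/eqP; rewrite eq_le ge_sup //; last by exists x.
by apply: sup_upper_bound => //; split; exists x.
Qed.

Lemma inf_eq_lb_mem A x : A x -> lbound A x -> inf A = x.
Proof.
move=> Ax lbx; apply/eqP; rewrite eq_le lb_le_inf ?andbT //; last by exists x.
by apply: ge_inf => //; exists x.
Qed.

Lemma sum_mulr_indicator {n} (x : 'I_n -> R) e : \sum_(i < n) x i * (i == e)%:R = x e.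
Proof.
by rewrite (bigD1 e) //= eqxx mulr1 big1 ?addr0 // => i /negbTE ->; rewrite mulr0.
Qed.

Lemma sum_indicator {n} (e : 'I_n) : \sum_(i < n) ((i == e)%:R : R) = 1.
Proof.
by rewrite -[RHS](sum_mulr_indicator (fun=> 1) e); under [RHS]eq_bigr do rewrite mul1r.
Qed.

Lemma maxdom_ge {E} (f : 'I_E -> R) e : f e <= maxdom f.
Proof.
apply: sup_upper_bound; last by exists e.
split; first by exists (f e), e.
by exists (\big[Num.max/f e]_(i < E) f i) => _ [i _ <-]; rewrite le_bigmax_cond.
Qed.

Lemma maxdom_le {E} (f : 'I_E -> R) b : (0 < E)%N ->
  (forall e, f e <= b) -> maxdom f <= b.
Proof.
move=> E_gt0 fb; apply: ge_sup; first by exists (f (Ordinal E_gt0)), (Ordinal E_gt0).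
by move=> _ [i _ <-].
Qed.

Lemma maxdom_attained {E} (f : 'I_E -> R) : (0 < E)%N -> exists e, maxdom f = f e.
Proof.
move=> E_gt0; have [e _ fe_max] := @arg_maxP _ _ _ (Ordinal E_gt0) xpredT f isT.
exists e; apply: sup_eq_ub_mem; first by exists e.
by move=> _ [i _ <-]; apply: fe_max.
Qed.

End RealBasics.

Section LossConvexity.
Context {R : realType} {p k : nat}.
Implicit Types (V W : 'M[R]_(p, k)) (S : 'M[R]_p).

Lemma LvarE V S :
  Lvar V S = \sum_(a < k) \sum_(i < p) \sum_(j < p) V i a * S i j * V j a.
Proof.
apply: eq_bigr => a _; rewrite mxE; under eq_bigr => j _ do rewrite mxE big_distrl.
by rewrite exchange_big; apply: eq_bigr => i _; apply: eq_bigr => j _; rewrite mxE.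
Qed.

Lemma Lvar_sum E V (lam : 'I_E -> R) (S_ : 'I_E -> 'M[R]_p) :
  Lvar V (\sum_(e < E) lam e *: S_ e) = \sum_(e < E) lam e * Lvar V (S_ e).
Proof.
rewrite /Lvar mulmx_sumr mulmx_suml raddf_sum; apply: eq_bigr => e _.
by rewrite -scalemxAr -scalemxAl; apply: mxtraceZ.
Qed.

Lemma LRCS_sum E V (lam : 'I_E -> R) (S_ : 'I_E -> 'M[R]_p) :
  LRCS V (\sum_(e < E) lam e *: S_ e) = \sum_(e < E) lam e * LRCS V (S_ e).
Proof.
rewrite /LRCS Lvar_sum raddf_sum -sumrB; apply: eq_bigr => e _.
by rewrite mulrBr; congr (_ - _); apply: mxtraceZ.
Qed.

Lemma orthonormal_entry_le1 W i a : orthonormal_mx W -> `|W i a| <= 1.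
Proof.
move=> oW; rewrite -(expr_le1 (n := 2)) // real_normK ?num_real //.
have : (W^T *m W) a a = 1 by rewrite oW mxE eqxx.
rewrite mxE (bigD1 i) //= => <-; rewrite mxE -expr2 lerDl.
by apply: sumr_ge0 => j _; rewrite mxE -expr2 sqr_ge0.
Qed.

Lemma Lvar_le_sum_norm W S :
  orthonormal_mx W -> Lvar W S <= \sum_(a < k) \sum_(i < p) \sum_(j < p) `|S i j|.
Proof.
move=> oW; rewrite LvarE; do 3 (apply: ler_sum => ? _).
apply: le_trans (ler_norm _) _; rewrite !normrM mulrC mulrA.
by rewrite ler_piMl // mulr_ile1 ?orthonormal_entry_le1.
Qed.

Lemma orthonormal_exists : (k <= p)%N -> exists W : 'M[R]_(p, k), orthonormal_mx W.
Proof.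
move=> kp; exists (pid_mx k).
by rewrite /orthonormal_mx tr_pid_mx mul_pid_mx minnn (minn_idPr kp) pid_mx_1.
Qed.

Lemma has_inf_LRCS S : (k <= p)%N ->
  has_inf [set LRCS W S | W in [set W : 'M[R]_(p, k) | orthonormal_mx W]].
Proof.
move=> kp; split.
  by have [W oW] := orthonormal_exists kp; exists (LRCS W S), W.
exists (\tr S - \sum_(a < k) \sum_(i < p) \sum_(j < p) `|S i j|).
by move=> _ [W oW <-]; rewrite lerD2l lerN2 Lvar_le_sum_norm.
Qed.

Lemma Lk_convex kind {E} V (lam : 'I_E -> R) (S_ : 'I_E -> 'M[R]_p) :
  (k <= p)%N -> (forall e, 0 <= lam e) ->
  Lk kind V (\sum_(e < E) lam e *: S_ e) <= \sum_(e < E) lam e * Lk kind V (S_ e).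
Proof.
move=> kp lam_ge0; case: kind => /=.
- by rewrite LRCS_sum.
- by rewrite Lvar_sum -sumrN; under [X in _ <= X]eq_bigr do rewrite mulrN.
rewrite /Lreg LRCS_sum; under [X in _ <= X]eq_bigr do rewrite mulrBr.
rewrite sumrB lerD2l lerN2; apply: lb_le_inf.
  by have [] := has_inf_LRCS (\sum_(e < E) lam e *: S_ e) kp.
move=> _ [W oW <-]; rewrite LRCS_sum; apply: ler_sum => e _.
by rewrite ler_wpM2l //; apply: ge_inf; [case: (has_inf_LRCS (S_ e) kp) | exists W].
Qed.

End LossConvexity.

Section WorstCaseOverHull.
Context {R : realType} {p k E : nat} (kind : loss_kind).
Context {dT : 'I_E -> measure_display} {T : forall e, measurableType (dT e)}.
Context {Pe : forall e, probability (T e) R} {Xe : forall e, T e -> 'rV[R]_p}.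
Hypotheses (kp : (k <= p)%N) (E_gt0 : (0 < E)%N).
Hypothesis Xe_centered : forall e, centered_rv (Pe e) (Xe e).

Let Sig e := cov (Pe e) (Xe e).
Let maxL (V : 'M[R]_(p, k)) := maxdom (fun e => Lk kind V (Sig e)).

Lemma loss_values_ub V : ubound (loss_values kind Sig V) (maxL V).
Proof.
move=> _ [d [T' [P [X [_ [[lam [lam_ge0 [lam_sum1 ->]]] ->]]]]]].
apply: le_trans (Lk_convex kind V lam Sig kp lam_ge0) _.
rewrite -[maxL V]mul1r -lam_sum1 big_distrl /=.
by apply: ler_sum => e _; rewrite ler_wpM2l ?maxdom_ge.
Qed.

Lemma loss_values_maxL V : loss_values kind Sig V (maxL V).
Proof.
rewrite /maxL; have [e0 ->] := maxdom_attained (fun e => Lk kind V (Sig e)) E_gt0.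
exists (dT e0), (T e0), (Pe e0), (Xe e0); split=> //; split=> //.
exists (fun e => (e == e0)%:R); split; first by move=> e; rewrite ler0n.
split; first exact: sum_indicator.
by rewrite (bigD1 e0) //= big1 ?eqxx ?scale1r ?addr0 // => e /negbTE->; rewrite scale0r.
Qed.

Lemma is_sup_loss_values V : is_sup (loss_values kind Sig V) (maxL V).
Proof. by split=> [|b]; [exact: loss_values_ub | apply; exact: loss_values_maxL]. Qed.

Lemma supP_maxdom V : supP kind Sig V = maxL V.
Proof. exact: sup_eq_ub_mem (loss_values_maxL V) (loss_values_ub V). Qed.

End WorstCaseOverHull.

Section RankOneLosses.
Context {R : realType}.

Lemma Lvar_delta {n} (V : 'M[R]_(n, 1)) e : Lvar V (delta_mx e e) = V e 0 ^+ 2.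
Proof.
rewrite LvarE big_ord1 expr2 -{1}(sum_mulr_indicator (fun i => V i 0) e).
rewrite -(sum_mulr_indicator (fun j => V j 0) e) mulr_suml.
apply: eq_bigr => i _; rewrite mulr_sumr.
by apply: eq_bigr => j _; rewrite mxE -mulnb natrM; ring.
Qed.

Lemma orthonormal_delta {n} (e : 'I_n) : orthonormal_mx (delta_mx e 0 : 'M[R]_(n, 1)).
Proof.
rewrite /orthonormal_mx trmx_delta mul_delta_mx.
by apply/matrixP => i j; rewrite !ord1 !mxE.
Qed.

Lemma mxtrace_delta {n} (e : 'I_n) : \tr (delta_mx e e : 'M[R]_n) = 1.
Proof. by rewrite /mxtrace; under eq_bigr do rewrite mxE andbb; exact: sum_indicator. Qed.

Lemma LRCS_delta {n} (V : 'M[R]_(n, 1)) e : LRCS V (delta_mx e e) = 1 - V e 0 ^+ 2.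
Proof. by rewrite /LRCS Lvar_delta mxtrace_delta. Qed.

Lemma Lk_delta kind {n} (V : 'M[R]_(n, 1)) e :
  Lk kind V (delta_mx e e) = if kind is negVar_loss then - V e 0 ^+ 2 else 1 - V e 0 ^+ 2.
Proof.
case: kind => /=; rewrite ?Lvar_delta ?LRCS_delta //.
rewrite /Lreg (@inf_eq_lb_mem _ _ 0) ?LRCS_delta ?subr0 //.
  exists (delta_mx e 0); first exact: orthonormal_delta.
  by rewrite LRCS_delta mxE !eqxx expr1n subrr.
by move=> _ [W oW <-]; rewrite LRCS_delta subr_ge0 -real_normK ?num_real //
  expr_le1 // orthonormal_entry_le1.
Qed.

End RankOneLosses.

Section Counterexample.
Context {R : realType}.

Definition fair_coin : probability bool R := bernoulli_prob 2^-1.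

Lemma bernoulli_half_integral (g : bool -> R) :
  (\int[fair_coin]_t (g t)%:E = ((g true + g false) / 2)%:E)%E.
Proof.
have half01 : 0 <= (2^-1 : R) <= 1 by apply/andP; split; lra.
rewrite integralE.
rewrite integral_bernoulli_prob; [|exact: half01|by move=> x; exact: funepos_ge0].
rewrite integral_bernoulli_prob; [|exact: half01|by move=> x; exact: funeneg_ge0].
rewrite !funeposE !funenegE -!EFinN -!EFin_max /unstable.onem -!EFinM -!EFinD.
congr (_%:E).
have max_sub (x : R) : Num.max x 0 - Num.max (- x) 0 = x.
  by rewrite !maxElt; do 2 case: ifPn => ?; lra.
have := max_sub (g true); have := max_sub (g false); lra.
Qed.

Definition random_axis (e : 'I_2) (t : bool) : 'rV[R]_2 :=
  \row_j ((if t then 1 else -1) * (j == e)%:R).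

Lemma random_axis_centered e : centered_rv fair_coin (random_axis e).
Proof.
split; first by move=> i _ Y _.
split=> i; last by rewrite bernoulli_half_integral !mxE; congr (_%:E); ring.
apply/integrableP; split; first by move=> _ Y _.
by under eq_integral do rewrite abse_EFin; rewrite bernoulli_half_integral ltry.
Qed.

Lemma cov_random_axis e : cov fair_coin (random_axis e) = delta_mx e e.
Proof.
apply/matrixP => i j; rewrite !mxE bernoulli_half_integral /= !mxE.
by case: (i == e); case: (j == e); rewrite /=; field.
Qed.

Lemma ord2_cases (e : 'I_2) : e = 0 \/ e = 1.
Proof. by case: e => [[|[|]]] // ?; [left | right]; apply: val_inj. Qed.

Lemma ord2_sum (f : 'I_2 -> R) : \sum_(e < 2) f e = f 0 + f 1.
Proof. by rewrite big_ord_recl big_ord1; congr (f _ + f _); exact: val_inj. Qed.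

Lemma orthonormal_ord2 {V : 'M[R]_(2, 1)} :
  orthonormal_mx V -> V 0 0 ^+ 2 + V 1 0 ^+ 2 = 1.
Proof.
move=> oV; have : (V^T *m V) 0 0 = 1 by rewrite oV mxE.
by rewrite mxE ord2_sum !mxE -!expr2.
Qed.

Definition axis_covs (e : 'I_2) : 'M[R]_2 := cov fair_coin (random_axis e).

Lemma supP_axis_covs kind (V : 'M[R]_(2, 1)) :
  supP kind axis_covs V = maxdom (fun e => Lk kind V (delta_mx e e)).
Proof.
rewrite (@supP_maxdom _ 2 1 2 kind _ _ _ _ isT isT random_axis_centered).
by congr maxdom; apply: funext => e; rewrite /axis_covs cov_random_axis.
Qed.

Definition diag_dir : 'M[R]_(2, 1) := const_mx (Num.sqrt 2^-1).

Lemma orthonormal_diag_dir : orthonormal_mx diag_dir.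
Proof.
have sqrt_half : Num.sqrt (2^-1 : R) ^+ 2 = 2^-1 by rewrite sqr_sqrtr //; lra.
apply/matrixP => a b; rewrite !ord1 !mxE ord2_sum !mxE -!expr2 sqrt_half /=; lra.
Qed.

(* An axis direction misses one source entirely, giving worst-case loss [c];
   the diagonal captures half of each source's variance, giving [c - 1/2]. *)
Lemma axis_not_minimax kind (V : 'M[R]_(2, 1)) :
  V 0 0 = 0 \/ V 1 0 = 0 -> ~ argmin_orth (supP kind axis_covs) V.
Proof.
move=> V_axis [_ /(_ _ orthonormal_diag_dir)]; rewrite !supP_axis_covs.
set c : R := if kind is negVar_loss then 0 else 1.
have V_worst : c <= maxdom (fun e => Lk kind V (delta_mx e e)).
  case: V_axis => V0;
    [apply: le_trans (maxdom_ge _ 0) | apply: le_trans (maxdom_ge _ 1)];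
    by rewrite Lk_delta V0 expr0n /c; case: kind {c} => /=; lra.
have diag_worst : maxdom (fun e => Lk kind diag_dir (delta_mx e e)) <= c - 2^-1.
  apply: maxdom_le => // e; rewrite Lk_delta mxE sqr_sqrtr /c; last lra.
  by case: kind {c V_worst} => /=; lra.
by move=> V_le; have := le_trans V_worst (le_trans V_le diag_worst); lra.
Qed.

Definition pool_weights (e : 'I_2) : R := if e == 0 then 2/3 else 1/3.

Lemma poolPCA_axis (V : 'M[R]_(2, 1)) :
  is_poolPCA pool_weights axis_covs V -> V 1 0 = 0.
Proof.
move=> [oV /(_ _ (orthonormal_delta (0 : 'I_2)))].
rewrite !Lvar_sum !ord2_sum /axis_covs.
rewrite !cov_random_axis !Lvar_delta !mxE /pool_weights /= => Vmax.
apply/eqP; rewrite -sqrf_eq0 eq_le sqr_ge0 andbT.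
by have := orthonormal_ord2 oV; have := sqr_ge0 (V 0 0); lra.
Qed.

Lemma sepPCA_axis (Vs : 'I_2 -> 'M[R]_(2, 1)) V :
  is_sepPCA axis_covs Vs V -> V 0 0 = 0 \/ V 1 0 = 0.
Proof.
move=> [Vs_max [e0 [_ [_ ->]]]]; have [oV /(_ _ (orthonormal_delta e0))] := Vs_max e0.
rewrite /axis_covs cov_random_axis !Lvar_delta mxE !eqxx expr1n => Vmax.
have := orthonormal_ord2 oV; have := sqr_ge0 (Vs e0 0 0); have := sqr_ge0 (Vs e0 1 0).
by case: (ord2_cases e0) Vmax => -> Vmax *; [right | left];
  apply/eqP; rewrite -sqrf_eq0 eq_le sqr_ge0 andbT; lra.
Qed.

End Counterexample.

Theorem mainTheorem2 (R : realType) :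
  (forall (p k E : nat), (1 <= k <= p)%N -> (0 < E)%N ->
   forall (dT : 'I_E -> measure_display) (T : forall e, measurableType (dT e))
          (Pe : forall e, probability (T e) R) (Xe : forall e, T e -> 'rV[R]_p),
   (forall e, centered_rv (Pe e) (Xe e)) ->
   (forall e, 0 < \tr (cov (Pe e) (Xe e))) ->
   forall kind : loss_kind,
   let Sig := fun e => cov (Pe e) (Xe e) in
   let maxL := fun V : 'M[R]_(p, k) => maxdom (fun e => Lk kind V (Sig e)) in
   (forall V : 'M[R]_(p, k), orthonormal_mx V ->
      is_sup (loss_values kind Sig V) (maxL V)) /\
   (forall V W : 'M[R]_(p, k), orthonormal_mx V -> orthonormal_mx W ->
      maxL V < maxL W -> supP kind Sig V < supP kind Sig W) /\
   (forall Vstar : 'M[R]_(p, k), argmin_orth maxL Vstar ->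
      argmin_orth (supP kind Sig) Vstar))
  /\
  (forall kind : loss_kind,
   exists (p k E : nat), (1 <= k <= p)%N /\ (0 < E)%N /\
   exists (w : 'I_E -> R), (forall e, 0 < w e) /\ \sum_(e < E) w e = 1 /\
   exists (dT : 'I_E -> measure_display) (T : forall e, measurableType (dT e))
          (Pe : forall e, probability (T e) R) (Xe : forall e, T e -> 'rV[R]_p),
   (forall e, centered_rv (Pe e) (Xe e)) /\
   (forall e, 0 < \tr (cov (Pe e) (Xe e))) /\
   let Sig := fun e => cov (Pe e) (Xe e) in
   (forall Vpool : 'M[R]_(p, k), is_poolPCA w Sig Vpool ->
      ~ argmin_orth (supP kind Sig) Vpool) /\
   (forall (Vs : 'I_E -> 'M[R]_(p, k)) (Vsep : 'M[R]_(p, k)),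
      is_sepPCA Sig Vs Vsep -> ~ argmin_orth (supP kind Sig) Vsep)).
Proof.
split.
  move=> p k E /andP[_ kp] E_gt0 dT T Pe Xe Xe_centered _ kind Sig maxL.
  have supPE V : supP kind Sig V = maxL V := supP_maxdom kind kp E_gt0 Xe_centered V.
  split; first by move=> V _; exact: is_sup_loss_values.
  split; first by move=> V W _ _; rewrite !supPE.
  by move=> V [oV V_min]; split=> // W oW; rewrite !supPE; apply: V_min.
move=> kind; exists 2%N, 1%N, 2%N; do 2 split=> //.
exists pool_weights; split; first by move=> e; rewrite /pool_weights; case: ifP => _; lra.
split; first by rewrite ord2_sum /pool_weights /=; lra.
exists (fun=> _), (fun=> bool), (fun=> fair_coin), random_axis.
split; first exact: random_axis_centered.
split; first by move=> e; rewrite cov_random_axis mxtrace_delta ltr01.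
split=> [V /poolPCA_axis V10 | Vs V /sepPCA_axis V_axis]; apply: axis_not_minimax => //.
by right.
Qed.
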